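(* For any code $\mathcal C\subseteq 2^{[n]}$, the canonical form of the code $\mathcal C\setminus n\subseteq 2^{[n-1]}$ consists exactly of the pseudo-monomials in $\mathrm{CF}(J_\mathcal C)$ that do not depend on $x_n$: $$\mathrm{CF}(J_{\mathcal C\setminus n})=\mathrm{CF}(J_\mathcal C)\setminus\{f\in\mathrm{CF}(J_\mathcal C): x_n \text{ or } (1-x_n)\text{ divides } f\}.$$
   Context: A code is a set $\mathcal C\subseteq 2^{[n]}$, $[n]=\{1,\dots,n\}$. Standing conventions: $\emptyset\in\mathcal C$; every neuron lies in some codeword; no two distinct neurons lie in exactly the same codewords. $\mathcal C\setminus n$ is the code on $[n-1]$ obtained by removing $n$ from every codeword. A pseudo-monomial in $\mathbb F_2[x_1,\dots,x_n]$ is $\prod_{i\in\sigma}x_i\prod_{j\in\tau}(1-x_j)$ with $\sigma\cap\tau=\emptyset$, ordered by divisibility. For a code $\mathcal D$ on $[m]$, $J_\mathcal D=\langle\rho_\sigma:\sigma\subseteq[m],\sigma\notin\mathcal D\rangle\subseteq\mathbb F_2[x_1,\dots,x_m]$ with $\rho_\sigma=\prod_{i\in\sigma}x_i\prod_{j\in[m]\setminus\sigma}(1-x_j)$, and $\mathrm{CF}(J_\mathcal D)$ is the set of minimal pseudo-monomials in $J_\mathcal D$. *)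

From HB Require Import structures.
From mathcomp Require Import all_boot all_algebra.
From mathcomp Require Import mpoly.
Set Implicit Arguments. Unset Strict Implicit. Unset Printing Implicit Defensive.
Import GRing.Theory.
Local Open Scope ring_scope.

Notation F2 := ('F_2).
Notation poly2 n := {mpoly F2[n]}.

Definition code (n : nat) := {set {set 'I_n}}.

Definition code_conv (n : nat) (C : code n) : Prop :=
  [/\ set0 \in C,
      (forall i : 'I_n, exists2 c, c \in C & i \in c) &
      (forall i j : 'I_n, i != j -> exists2 c, c \in C & (i \in c) != (j \in c))].

(* C \ n : remove the last neuron (ord_max) from every codeword; code on [n-1]. *)
Definition code_del_last (m : nat) (C : code m.+1) : code m :=
  [set [set i : 'I_m | widen_ord (leqnSn m) i \in c] | c : {set 'I_m.+1} in C].

Definition pmono (n : nat) (s t : {set 'I_n}) : poly2 n :=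
  (\prod_(i in s) 'X_i) * (\prod_(j in t) (1 - 'X_j)).

Definition is_pseudo_monomial (n : nat) (f : poly2 n) : Prop :=
  exists s t : {set 'I_n}, [disjoint s & t] /\ f = pmono s t.

Definition mdvd (n : nat) (g f : poly2 n) : Prop := exists h : poly2 n, f = h * g.

Definition rho (n : nat) (s : {set 'I_n}) : poly2 n := pmono s (~: s).

Definition in_JC (n : nat) (C : code n) (f : poly2 n) : Prop :=
  exists g : {set 'I_n} -> poly2 n,
    f = \sum_(s in ~: C) g s * rho s.

Definition in_CF (n : nat) (C : code n) (f : poly2 n) : Prop :=
  [/\ is_pseudo_monomial f, in_JC C f &
      forall g : poly2 n, is_pseudo_monomial g -> in_JC C g -> mdvd g f -> g = f].

Definition embed_last (m : nat) (p : poly2 m) : poly2 m.+1 :=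
  mmap (@mpolyC m.+1 F2) (fun i : 'I_m => 'X_(widen_ord (leqnSn m) i)) p.

(* Evaluating at the indicator vectors of codewords shows that a pseudo-monomial
   x_s (1 - x_t) lies in J_C exactly when no codeword lies in the box
   {c | s <= c, c /\ t = 0}; conversely it is then a sum of rho_c over
   non-codewords c, obtained by splitting on the free variables one at a time.
   Divisibility of pseudo-monomials is inclusion of the pairs (s, t), so
   CF(J_C) consists of the inclusion-minimal box-free pairs.  Neither x_n nor
   1 - x_n divides x_s (1 - x_t) iff n lies outside s and t, and for such
   pairs a codeword lies in the box iff its restriction to [n-1] does, so the
   minimal box-free pairs of C avoiding n are exactly those of C \ n. *)

From HB Require Import structures.
From mathcomp Require Import all_boot all_algebra.
From mathcomp Require Import mpoly.
Set Implicit Arguments. Unset Strict Implicit. Unset Printing Implicit Defensive.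
Import GRing.Theory.
Local Open Scope ring_scope.

Lemma prod_indicator (R : comPzSemiRingType) (T : finType) (A B : {set T}) :
  \prod_(i in A) ((i \in B)%:R : R) = (A \subset B)%:R.
Proof.
have [/subsetP AB | /subsetPn [i iA iNB]] := boolP (A \subset B).
  by rewrite big1 // => i /AB ->.
by rewrite (bigD1 i iA) /= (negbTE iNB) mul0r.
Qed.

Section PseudoMonomials.
Variable n : nat.
Implicit Types (C : code n) (s t c : {set 'I_n}) (f : poly2 n).

Definition indicator c : 'I_n -> F2 := fun i => (i \in c)%:R.

Lemma meval_pmono_indicator s t c :
  (pmono s t).@[indicator c] = ((s \subset c) && [disjoint t & c])%:R.
Proof.
rewrite mevalM !rmorph_prod /= -mulnb natrM disjoints_subset -!prod_indicator.
congr (_ * _); apply: eq_bigr => i _.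
  by rewrite mevalXU.
rewrite mevalB meval1 mevalXU /indicator inE.
by case: (i \in c); rewrite ?subrr ?subr0.
Qed.

Lemma meval_rho_indicator s c : (rho s).@[indicator c] = (s == c)%:R.
Proof.
by rewrite meval_pmono_indicator disjoint_sym disjoints_subset setCK -eqEsubset.
Qed.

Lemma in_JC_meval_indicator C f c : in_JC C f -> c \in C -> f.@[indicator c] = 0.
Proof.
move=> [g ->] cC; rewrite raddf_sum /= big1 // => s; rewrite inE => sNC.
rewrite mevalM meval_rho_indicator; case: eqP => [sc|]; last by rewrite mulr0.
by rewrite sc cC in sNC.
Qed.

Lemma in_JC_add C f g : in_JC C f -> in_JC C g -> in_JC C (f + g).
Proof.
move=> [a ->] [b ->]; exists (fun s => a s + b s).
by rewrite -big_split; apply: eq_bigr => s _; rewrite mulrDl.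
Qed.

Lemma rho_in_JC C s : s \notin C -> in_JC C (rho s).
Proof.
move=> sNC; exists (fun c => (c == s)%:R).
rewrite (bigD1 s) ?inE //= eqxx mul1r big1 ?addr0 // => c /andP [_ /negbTE ->].
by rewrite mul0r.
Qed.

Lemma pmono_split s t i : i \notin s -> i \notin t ->
  pmono s t = pmono (i |: s) t + pmono s (i |: t).
Proof.
move=> iNs iNt; rewrite /pmono !big_setU1 //=.
by rewrite mulrCA -!mulrA -mulrDl addrC subrK mul1r.
Qed.

Definition box_free C s t : Prop :=
  forall c, c \in C -> ~~ ((s \subset c) && [disjoint t & c]).

Definition min_box_free C s t : Prop :=
  box_free C s t /\
  forall s' t', s' \subset s -> t' \subset t -> box_free C s' t' -> s' = s /\ t' = t.

Lemma box_freeS C s t s' t' :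
  s \subset s' -> t \subset t' -> box_free C s t -> box_free C s' t'.
Proof.
move=> ss' tt' box c /box; apply: contra => /andP [s'c t'c].
by rewrite (subset_trans ss' s'c) (disjointWl tt' t'c).
Qed.

Lemma box_free_pmono_in_JC C s t :
  [disjoint s & t] -> box_free C s t -> in_JC C (pmono s t).
Proof.
have [k] := ubnP #|~: (s :|: t)|; elim: k s t => // k IH s t.
rewrite ltnS => le_k dst box.
have [free0 | [i iFree]] := set_0Vmem (~: (s :|: t)).
  have tE : t = ~: s.
    apply/eqP; rewrite eqEsubset -disjoints_subset disjoint_sym dst /=.
    apply/subsetP => i iNs; apply: contraT => iNt.
    by rewrite -(in_set0 i) -free0 setCU inE iNs inE iNt.
  rewrite tE; apply: rho_in_JC; apply: (contraL (box s)).
  by rewrite subxx disjoint_sym.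
move: (iFree); rewrite setCU !inE => /andP [iNs iNt].
have disjoint_setU1 (A B : {set 'I_n}) :
    i \notin B -> [disjoint A & B] -> [disjoint i |: A & B].
  by move=> iNB; rewrite !disjoints_subset subUset sub1set inE iNB.
have shrink u : u = i |: (s :|: t) -> (#|~: u| < k)%N.
  move=> ->; apply: leq_trans le_k; rewrite [X in (_ < X)%N](cardsD1 i) iFree.
  by rewrite setCU setDE setIC.
rewrite (pmono_split iNs iNt); apply: in_JC_add; apply: IH.
- by apply: shrink; rewrite setUA.
- exact: disjoint_setU1 iNt dst.
- by apply: box_freeS box; rewrite ?subsetUr.
- by apply: shrink; rewrite setUCA.
- by rewrite disjoint_sym disjoint_setU1 // disjoint_sym.
- by apply: box_freeS box; rewrite ?subsetUr.
Qed.

Lemma in_JC_pmonoE C s t :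
  [disjoint s & t] -> in_JC C (pmono s t) <-> box_free C s t.
Proof.
move=> dst; split; last exact: box_free_pmono_in_JC.
move=> sJ c cC; have := in_JC_meval_indicator sJ cC.
by rewrite meval_pmono_indicator; case: (_ && _) => // /eqP; rewrite oner_eq0.
Qed.

Lemma mdvd_pmono_support s t f c :
  mdvd (pmono s t) f -> f.@[indicator c] != 0 -> (s \subset c) && [disjoint t & c].
Proof.
move=> [h ->]; rewrite mevalM meval_pmono_indicator.
by apply: contraNT => /negbTE ->; rewrite mulr0.
Qed.

Lemma mdvd_pmonoE s t s' t' : [disjoint s & t] ->
  mdvd (pmono s' t') (pmono s t) <-> s' \subset s /\ t' \subset t.
Proof.
move=> dst; split=> [dvd | [s's t't]].
  have /andP [s's _] : (s' \subset s) && [disjoint t' & s].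
    apply: mdvd_pmono_support dvd _.
    by rewrite meval_pmono_indicator subxx disjoint_sym dst oner_neq0.
  have /andP [_] : (s' \subset ~: t) && [disjoint t' & ~: t].
    apply: mdvd_pmono_support dvd _; rewrite meval_pmono_indicator.
    by rewrite -disjoints_subset dst disjoints_subset setCK subxx oner_neq0.
  by rewrite disjoints_subset setCK.
exists (pmono (s :\: s') (t :\: t')).
rewrite /pmono (@big_setID _ _ _ _ s s') (@big_setID _ _ _ _ t t') /=.
by rewrite (setIidPr s's) (setIidPr t't) mulrACA mulrC.
Qed.

Lemma pmono_inj s t s' t' : [disjoint s & t] -> [disjoint s' & t'] ->
  pmono s' t' = pmono s t -> s' = s /\ t' = t.
Proof.
move=> dst ds't' E.
have [s's t't] : s' \subset s /\ t' \subset t.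
  by apply/mdvd_pmonoE => //; exists 1; rewrite E mul1r.
have [ss' tt'] : s \subset s' /\ t \subset t'.
  by apply/mdvd_pmonoE => //; exists 1; rewrite E mul1r.
by split; apply/eqP; rewrite eqEsubset ?s's ?ss' ?t't ?tt'.
Qed.

Lemma mdvd_X_pmonoE s t (i : 'I_n) :
  [disjoint s & t] -> mdvd 'X_i (pmono s t) <-> i \in s.
Proof.
have -> : 'X_i = pmono [set i] set0 by rewrite /pmono big_set1 big_set0 mulr1.
move=> dst.
split=> [/(mdvd_pmonoE _ _ dst) [] | iS]; first by rewrite sub1set.
by apply/mdvd_pmonoE; rewrite ?sub1set ?sub0set.
Qed.

Lemma mdvd_1subX_pmonoE s t (i : 'I_n) :
  [disjoint s & t] -> mdvd (1 - 'X_i) (pmono s t) <-> i \in t.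
Proof.
have -> : 1 - 'X_i = pmono set0 [set i] by rewrite /pmono big_set1 big_set0 mul1r.
move=> dst.
split=> [/(mdvd_pmonoE _ _ dst) [] | iT]; first by rewrite sub1set.
by apply/mdvd_pmonoE; rewrite ?sub1set ?sub0set.
Qed.

Lemma in_CF_pmonoE C s t :
  [disjoint s & t] -> in_CF C (pmono s t) <-> min_box_free C s t.
Proof.
move=> dst; split.
  move=> [_ /(in_JC_pmonoE _ dst) box minJ]; split=> // s' t' s's t't box'.
  have ds't' : [disjoint s' & t'] by apply: disjointWr t't (disjointWl s's dst).
  apply: (pmono_inj dst ds't'); apply: minJ; first by exists s', t'.
    exact/in_JC_pmonoE.
  exact/mdvd_pmonoE.
move=> [box minB]; split; first by exists s, t.
  exact/in_JC_pmonoE.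
move=> _ [s' [t' [ds't' ->]]] /(in_JC_pmonoE _ ds't') box'.
by move=> /(mdvd_pmonoE _ _ dst) [s's t't]; have [-> ->] := minB _ _ s's t't box'.
Qed.
End PseudoMonomials.

Section Restriction.
Variables (m n : nat) (h : 'I_m -> 'I_n).
Implicit Types (C : code n) (a b : {set 'I_m}).

Lemma preimset_imset a : injective h -> h @^-1: (h @: a) = a.
Proof. by move=> h_inj; apply/setP => i; rewrite inE mem_imset. Qed.

Lemma imset_preimset (A : {set 'I_n}) b : A \subset h @: b -> h @: (h @^-1: A) = A.
Proof.
move=> /subsetP Ab; apply/setP => j; apply/imsetP/idP => [[i] | jA].
  by rewrite inE => hiA ->.
by have /imsetP [i _ ji] := Ab j jA; exists i; rewrite // inE -ji.
Qed.

Lemma box_free_preimset C a b :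
  box_free C (h @: a) (h @: b) <->
  box_free [set h @^-1: c | c : {set 'I_n} in C] a b.
Proof.
have boxE (c : {set 'I_n}) : (h @: a \subset c) && [disjoint h @: b & c] =
              (a \subset h @^-1: c) && [disjoint b & h @^-1: c].
  by rewrite !disjoints_subset !sub_imset_pre preimsetC.
split=> box c.
  by case/imsetP=> c' c'C ->; rewrite -boxE; apply: box.
by move=> cC; rewrite boxE; apply: box; apply: imset_f.
Qed.

Lemma min_box_free_preimset C a b : injective h ->
  min_box_free C (h @: a) (h @: b) <->
  min_box_free [set h @^-1: c | c : {set 'I_n} in C] a b.
Proof.
move=> h_inj; split=> [[/box_free_preimset box minB] | [box minB]]; split=> //.
- move=> a' b' a'a b'b /box_free_preimset box'.
  have [] := minB _ _ (imsetS h a'a) (imsetS h b'b) box'.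
  by move=> /(imset_inj h_inj) -> /(imset_inj h_inj) ->.
- exact/box_free_preimset.
- move=> s' t' s'a t'b; rewrite -(imset_preimset s'a) -(imset_preimset t'b).
  move=> /box_free_preimset box'.
  have preS (A : {set 'I_n}) (B : {set 'I_m}) : A \subset h @: B -> h @^-1: A \subset B.
    by move=> AB; rewrite -(preimset_imset B h_inj); apply: preimsetS.
  by have [-> ->] := minB _ _ (preS _ _ s'a) (preS _ _ t'b) box'.
Qed.
End Restriction.

Section DeleteLast.
Variable m : nat.
Local Notation w := (widen_ord (leqnSn m)).

Lemma widen_ord_inj : injective w.
Proof. by move=> i j /(congr1 val) /= /val_inj. Qed.

Lemma code_del_lastE (C : code m.+1) :
  code_del_last C = [set w @^-1: c | c : {set 'I_m.+1} in C].
Proof. by []. Qed.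

Lemma embed_last_pmono (a b : {set 'I_m}) :
  embed_last (pmono a b) = pmono (w @: a) (w @: b).
Proof.
rewrite /embed_last /pmono rmorphM !rmorph_prod /= !big_imset /=;
  try by move=> i j _ _ /widen_ord_inj.
by congr (_ * _); apply: eq_bigr => i _; rewrite ?rmorphB ?rmorph1 /= mmapX mmap1U.
Qed.

Lemma ord_max_notin_widen (a : {set 'I_m}) : ord_max \notin w @: a.
Proof.
by apply/imsetP => -[i _ /(congr1 val) /= iE]; move: (ltn_ord i); rewrite -iE ltnn.
Qed.

Lemma sub_widen_range (s : {set 'I_m.+1}) : ord_max \notin s -> s \subset w @: setT.
Proof.
move=> sNmax; apply/subsetP => j js; apply/imsetP.
have jm : (j < m)%N.
  rewrite ltn_neqAle -ltnS ltn_ord andbT; apply: contraNneq sNmax => jE.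
  by rewrite -(@val_inj _ _ _ j ord_max jE).
by exists (Ordinal jm); rewrite ?inE //; apply: val_inj.
Qed.

Lemma in_CF_del_last (C : code m.+1) (a b : {set 'I_m}) : [disjoint a & b] ->
  in_CF C (pmono (w @: a) (w @: b)) <-> in_CF (code_del_last C) (pmono a b).
Proof.
move=> dab.
have dab' : [disjoint w @: a & w @: b] by rewrite (imset_disjoint widen_ord_inj).
rewrite code_del_lastE; apply: iff_trans (in_CF_pmonoE _ dab') _.
apply: iff_trans (iff_sym (in_CF_pmonoE _ dab)).
exact: min_box_free_preimset widen_ord_inj.
Qed.
End DeleteLast.

Theorem lemma2p1 (m : nat) (C : code m.+1) (hC : code_conv C) (f : poly2 m.+1) :
  (exists2 g : poly2 m, in_CF (code_del_last C) g & f = embed_last g) <->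
  [/\ in_CF C f,
      ~ mdvd 'X_(@ord_max m) f &
      ~ mdvd (1 - 'X_(@ord_max m)) f].
Proof.
pose w := widen_ord (leqnSn m).
(* The conventions [hC] are not needed: the statement holds for every code. *)
split=> [[g gCF ->] | [fCF nX nX1]].
  have [[a [b [dab gE]]] _ _] := gCF; subst g.
  have dab' : [disjoint w @: a & w @: b] by rewrite (imset_disjoint (@widen_ord_inj m)).
  rewrite embed_last_pmono; split.
  - exact/in_CF_del_last.
  - by move=> /(mdvd_X_pmonoE _ dab'); apply/negP/ord_max_notin_widen.
  - by move=> /(mdvd_1subX_pmonoE _ dab'); apply/negP/ord_max_notin_widen.
have [[s [t [dst fE]]] _ _] := fCF; subst f.
have sNmax : ord_max \notin s by apply/negP => /(mdvd_X_pmonoE _ dst); exact: nX.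
have tNmax : ord_max \notin t by apply/negP => /(mdvd_1subX_pmonoE _ dst); exact: nX1.
rewrite -(imset_preimset (sub_widen_range sNmax)) in fCF dst *.
rewrite -(imset_preimset (sub_widen_range tNmax)) in fCF dst *.
rewrite (imset_disjoint (@widen_ord_inj m)) in dst.
exists (pmono (w @^-1: s) (w @^-1: t)); first exact/in_CF_del_last.
by rewrite embed_last_pmono.
Qed.
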